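(* Let $X$ be a simplicial complex and let $\gamma$ be an $i$-non-skipping simple cycle in $X$. Then any test for list agreement of $1$-dimensional $2$-assignments on $X$ must perform at least $|\gamma|/i$ queries.
   Context: A $1$-dimensional $2$-assignment on $X$ gives each edge $e\in X(1)$ two functions $L^e_1,L^e_2:e\to\{0,1\}$; it is agreeing if there are $g_1,g_2:X(0)\to\{0,1\}$ and for each edge a permutation $\pi_e$ of $\{1,2\}$ with $L^e_{\pi_e(i)}=g_i|_e$. A query is an edge and returns both local functions on it. A test for list agreement is a randomized, possibly adaptive algorithm that accepts every agreeing $2$-assignment with probability $1$ and rejects every non-agreeing one with positive probability (no locally-differing assumption is made). A simple cycle $\gamma=(\gamma_0,\dots,\gamma_{n-1})$ in the graph $(X(0),X(1))$ has length $|\gamma|=n$ (indices mod $n$); $\mathrm{dist}_\gamma$ is the distance along the cycle. An edge $e=\{\gamma_a,\gamma_b\}\in X(1)$ skips the cycle edge $\{\gamma_c,\gamma_{c+1}\}$ if $\mathrm{dist}_\gamma(\gamma_a,\gamma_b)=\mathrm{dist}_\gamma(\gamma_a,\gamma_c)+\mathrm{dist}_\gamma(\gamma_{c+1},\gamma_b)+1$ (i.e. the cycle edge lies on a shortest arc of $\gamma$ between the endpoints of $e$). $\gamma$ is $i$-non-skipping if every edge of $X$ with both endpoints on $\gamma$ skips at most $i$ cycle edges. *)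

From mathcomp Require Import all_boot all_order all_fingroup all_algebra.
Set Implicit Arguments. Unset Strict Implicit. Unset Printing Implicit Defensive.
Import Order.TTheory GRing.Theory Num.Theory.

(* list membership (Prop-valued, no eqType needed) *)
Fixpoint InSeq {T : Type} (x : T) (s : seq T) : Prop :=
  match s with nil => False | y :: s' => y = x \/ InSeq x s' end.

Section Defs.
Variable V : finType.

Definition is_complex (X : {set {set V}}) : Prop :=
  forall s t : {set V}, s \in X -> t \subset s -> t \in X.

Definition edges (X : {set {set V}}) : {set {set V}} :=
  [set e in X | #|e| == 2].

(* A 1-dimensional 2-assignment: each edge e gets two local functions
   L e false = L^e_1 and L e true = L^e_2 (only their values on e matter). *)
Definition assignment := {set V} -> bool -> V -> bool.

Definition agreeing (X : {set {set V}}) (L : assignment) : Prop :=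
  exists g : bool -> V -> bool,
    forall e, e \in edges X ->
      exists pi : {perm bool}, forall j : bool, {in e, L e (pi j) =1 g j}.

(* Answer to a query on edge e: the two local functions restricted to e
   (normalized to false outside e so nothing else is revealed). *)
Definition answer (L : assignment) (e : {set V}) (j : bool) : V -> bool :=
  fun x => (x \in e) && L e j x.

(* Deterministic adaptive query algorithm (decision tree); leaves are
   accept (true) / reject (false). *)
Inductive dtree : Type :=
| DLeaf of bool
| DQuery of {set V} & ((V -> bool) -> (V -> bool) -> dtree).

Fixpoint run (L : assignment) (t : dtree) : bool :=
  match t with
  | DLeaf b => b
  | DQuery e k => run L (k (answer L e false) (answer L e true))
  end.

Inductive tree_ok (X : {set {set V}}) : nat -> dtree -> Prop :=
| ok_leaf q b : tree_ok X q (DLeaf b)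
| ok_query q e k : e \in edges X ->
    (forall f1 f2, tree_ok X q (k f1 f2)) -> tree_ok X q.+1 (DQuery e k).

(* A randomized adaptive algorithm making at most q queries: a (finitely
   supported) probability distribution over deterministic q-query trees. *)
Definition acc_prob (D : seq (rat * dtree)) (L : assignment) : rat :=
  (\sum_(p <- D) p.1 * (run L p.2)%:R)%R.

Definition is_list_agreement_test (X : {set {set V}})
    (D : seq (rat * dtree)) (q : nat) : Prop :=
  [/\ forall p, InSeq p D -> (0 < p.1)%R,
      (\sum_(p <- D) p.1)%R = 1%R,
      forall p, InSeq p D -> tree_ok X q p.2,
      forall L, agreeing X L -> acc_prob D L = 1%R
    & forall L, ~ agreeing X L -> (acc_prob D L < 1)%R].

Definition simple_cycle (X : {set {set V}}) n (gamma : 'I_n -> V) : Prop :=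
  [/\ 3 <= n, injective gamma &
      forall k : 'I_n, [set gamma k; gamma (ordS k)] \in edges X].

Definition cdist n (a b : 'I_n) : nat :=
  let d := if a <= b then b - a else a - b in minn d (n - d).

Definition skips n (gamma : 'I_n -> V) (e : {set V}) (c : 'I_n) : bool :=
  [exists a : 'I_n, exists b : 'I_n, (e == [set gamma a; gamma b]) &&
    (cdist a b == cdist a c + cdist (ordS c) b + 1)].

Definition non_skipping (X : {set {set V}}) n (gamma : 'I_n -> V) (i : nat)
  : Prop :=
  forall e, e \in edges X -> {subset e <= codom gamma} ->
    #|[set c : 'I_n | skips gamma e c]| <= i.

End Defs.
Arguments DLeaf {V}.

From mathcomp Require Import all_boot all_order all_fingroup all_algebra.
From mathcomp Require Import zify lra.
Set Implicit Arguments. Unset Strict Implicit. Unset Printing Implicit Defensive.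
Import Order.TTheory GRing.Theory Num.Theory.

(* Let L be the assignment that labels the cycle vertices of each edge e by
   "reached from the other endpoint of e by crossing the seam
   {gamma_(n-1), gamma_0} along a shortest arc" and uses label xor j as its
   j-th local function.  Going once around the cycle the labels flip exactly
   once, at the seam, so L is not agreeing.  For a cut position c, the global
   pair [k <= c] xor j agrees with L on every edge that does not skip the
   cycle edge {gamma_c, gamma_(c+1)}; patching L with it on the other edges
   gives an agreeing assignment L_c.  Each query rules out at most i of the n
   cuts, so if q * i < n every q-query decision tree behaves on L as on some
   L_c and accepts L; then the test accepts L with probability 1. *)

Lemma cdistC n (a b : 'I_n) : cdist a b = cdist b a.
Proof. by rewrite /cdist; case: (ltngtP a b) => ab //; rewrite ab. Qed.

Lemma cdist_le n (a b : 'I_n) : a <= b -> cdist a b = minn (b - a) (n - (b - a)).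
Proof. by rewrite /cdist => ->. Qed.

Lemma ordS_val n (k : 'I_n) : ordS k = (if k.+1 < n then k.+1 else 0) :> nat.
Proof.
rewrite /=; case: ltnP => [/modn_small // | kn].
by rewrite (_ : k.+1 = n) ?modnn //; apply/eqP; rewrite eqn_leq kn ltn_ord.
Qed.

Lemma unskipped_wraps_iff_cut_between n (a b c : 'I_n) : a < b ->
  cdist a b != cdist a c + cdist (ordS c) b + 1 ->
  cdist b a != cdist b c + cdist (ordS c) a + 1 ->
  (n < 2 * (b - a)) = (a <= c < b).
Proof.
move=> ab /eqP noskip_ab /eqP noskip_ba; have bn := ltn_ord b; have cn := ltn_ord c.
case: (ltnP c a) => [ca | ac].
  have Sc : ordS c = c.+1 :> nat by rewrite ordS_val ifT //; lia.
  rewrite /=; apply/negP => wrap; apply: noskip_ba.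
  rewrite (cdistC b a) (cdistC b c) !cdist_le; lia.
case: (ltnP c b) => [cb | bc] /=.
  have Sc : ordS c = c.+1 :> nat by rewrite ordS_val ifT //; lia.
  apply/idP/negP => short; apply: noskip_ab.
  rewrite !cdist_le; lia.
apply/negP => wrap; apply: noskip_ba.
move: (ordS_val c); case: ltnP => c_last Sc.
  rewrite (cdistC b a) (cdistC (ordS c) a) !cdist_le; lia.
rewrite (cdistC b a) !cdist_le; lia.
Qed.

Lemma unskipped_cut_compatible n (a b c : 'I_n) : a != b ->
  cdist a b != cdist a c + cdist (ordS c) b + 1 ->
  cdist b a != cdist b c + cdist (ordS c) a + 1 ->
  (n < 2 * (a - b)) (+) (a <= c) = (n < 2 * (b - a)) (+) (b <= c).
Proof.
wlog ab : a b / a < b => [wlog neq noskip_ab noskip_ba | _ noskip_ab noskip_ba].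
  case: (ltngtP a b) => [ab | ba | /val_inj eq_ab]; first exact: wlog.
    by rewrite (wlog b a ba) // eq_sym.
  by rewrite eq_ab eqxx in neq.
rewrite (unskipped_wraps_iff_cut_between ab noskip_ab noskip_ba) (_ : a - b = 0); last lia.
by case: (leqP b c) => bc; rewrite muln0 ltn0 /= ?andbT ?andbF //; lia.
Qed.

Lemma big_addb_ordS_flips n (f : 'I_n -> bool) :
  \big[addb/false]_k (f (ordS k) (+) f k) = false.
Proof. by rewrite big_split /= [X in _ (+) X](reindex_inj (@ordS_inj n)) addbb. Qed.

Lemma card2_set2 (T : finType) (e : {set T}) x y :
  #|e| = 2 -> x \in e -> y \in e -> x != y -> e = [set x; y].
Proof.
move=> e2 xe ye xy; apply/esym/eqP.
by rewrite eqEcard subUset !sub1set xe ye cards2 xy e2.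
Qed.

Section Agreement.
Variable V : finType.

Definition agrees_on (l g : bool -> V -> bool) (e : {set V}) : bool :=
  [exists pi : {perm bool}, [forall j, [forall v in e, l (pi j) v == g j v]]].

Lemma agrees_onP l g (e : {set V}) :
  reflect (exists pi : {perm bool}, forall j, {in e, l (pi j) =1 g j})
          (agrees_on l g e).
Proof.
apply: (iffP existsP) => [[pi /forallP agr] | [pi agr]]; exists pi.
  by move=> j v ve; apply/eqP/(forall_inP (agr j)).
by apply/forallP => j; apply/forall_inP => v ve; rewrite agr.
Qed.

Definition patch (L : assignment V) (g : bool -> V -> bool) : assignment V :=
  fun e => if agrees_on (L e) g e then L e else g.

Lemma patch_agreeing X L g : agreeing X (patch L g).
Proof.
exists g => e _; rewrite /patch; case: ifP => [/agrees_onP // | _].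
by exists 1%g => j v _; rewrite perm1.
Qed.

End Agreement.

Section Adversary.
Variables (V C : finType) (X : {set {set V}}) (L : assignment V).
Variables (L' : C -> assignment V) (bad : {set V} -> {set C}) (i : nat).
Hypothesis bad_small : forall e, e \in edges X -> #|bad e| <= i.
Hypothesis L'_eq : forall c e, e \in edges X -> c \notin bad e -> L' c e = L e.

Lemma run_eq_off_small_set m t : tree_ok X m t ->
  exists2 B : {set C}, #|B| <= m * i & forall c, c \notin B -> run (L' c) t = run L t.
Proof.
elim=> [q b | q e k eX _ IH]; first by exists set0; rewrite ?cards0.
have [B B_small B_eq] := IH (answer L e false) (answer L e true).
exists (bad e :|: B) => [|c].
  by rewrite mulSn (leq_trans (leq_card_setU _ _).1) ?leq_add ?bad_small.
by rewrite inE negb_or => /andP[/(L'_eq eX) /= eq_e /B_eq]; rewrite /answer eq_e.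
Qed.

Lemma exists_run_eq m t : tree_ok X m t -> m * i < #|C| ->
  exists c, run (L' c) t = run L t.
Proof.
move=> /run_eq_off_small_set [B B_small B_eq] few.
have [c] : exists c, c \in ~: B by apply/card_gt0P; have := cardsC B; lia.
by rewrite inE => /B_eq; exists c.
Qed.

End Adversary.

Local Open Scope ring_scope.

Lemma acc_prob_le (V : finType) (D : seq (rat * dtree V)) L :
  (forall p, InSeq p D -> 0 <= p.1) -> acc_prob D L <= \sum_(p <- D) p.1.
Proof.
rewrite /acc_prob; elim: D => [|p D IH] D_ge0; first by rewrite !big_nil.
rewrite !big_cons lerD ?IH // => [|p' Dp']; last by apply: D_ge0; right.
by case: (run L p.2); rewrite ?mulr1 ?mulr0 ?D_ge0 //; left.
Qed.

Lemma acc_prob_total (V : finType) (D : seq (rat * dtree V)) L :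
  (forall p, InSeq p D -> 0 < p.1) ->
  acc_prob D L = \sum_(p <- D) p.1 <-> forall p, InSeq p D -> run L p.2.
Proof.
elim: D => [|p D IH] D_gt0; first by rewrite /acc_prob !big_nil.
have p_gt0 : 0 < p.1 by apply: D_gt0; left.
have {}IH := IH (fun p' Dp' => D_gt0 p' (or_intror Dp')).
have acc_le := acc_prob_le L (fun p' Dp' => ltW (D_gt0 p' (or_intror Dp'))).
rewrite /acc_prob !big_cons -/(acc_prob D L); split => [eq_tot p' | run_all].
  have run_p : run L p.2.
    by apply: contraT => /negbTE run_p; move: eq_tot; rewrite run_p mulr0 add0r; lra.
  move: eq_tot; rewrite run_p mulr1 => /addrI /IH run_D [<- // | /run_D //].
rewrite run_all /=; last by left.
by rewrite mulr1 (IH.2 (fun p' Dp' => run_all p' (or_intror Dp'))).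
Qed.

Lemma test_accepts_agreeing (V : finType) (X : {set {set V}}) D q L :
  is_list_agreement_test X D q -> agreeing X L -> forall p, InSeq p D -> run L p.2.
Proof.
by case=> D_gt0 D_sum _ accepts _ /accepts; rewrite -D_sum => /acc_prob_total; apply.
Qed.

Local Close Scope ring_scope.

Lemma skipped_card (V : finType) (X : {set {set V}}) n (gamma : 'I_n -> V) i e :
  non_skipping X gamma i -> e \in edges X -> #|[set c | skips gamma e c]| <= i.
Proof.
move=> noskip eX; have [/subsetP sub | not_sub] := boolP (e \subset codom gamma).
  exact: noskip.
rewrite (_ : [set c | _] = set0) ?cards0 //; apply/setP => c; rewrite !inE.
apply: contraNF not_sub => /existsP[a /existsP[b /andP[/eqP -> _]]].
by apply/subsetP => v; rewrite !inE => /orP[] /eqP ->; apply: codom_f.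
Qed.

Section Cycle.
Variables (V : finType) (n : nat) (gamma : 'I_n -> V).
Hypothesis gamma_inj : injective gamma.

Definition lift_cycle (s : 'I_n -> bool) (j : bool) : V -> bool :=
  fun v => if [pick k | gamma k == v] is Some k then s k (+) j else false.

Lemma lift_cycle_gamma s j k : lift_cycle s j (gamma k) = s k (+) j.
Proof.
by rewrite /lift_cycle; case: pickP => [k' /eqP /gamma_inj -> | /(_ k)] //; rewrite eqxx.
Qed.

Lemma lift_cycle_agrees (s t : 'I_n -> bool) (e : {set V}) :
  (forall a b, gamma a \in e -> gamma b \in e -> s a (+) t a = s b (+) t b) ->
  agrees_on (lift_cycle s) (lift_cycle t) e.
Proof.
move=> const_on_e; apply/agrees_onP.
pose d := [exists a, (gamma a \in e) && (s a (+) t a)].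
exists (perm (@addbI d)) => j v ve; rewrite permE /lift_cycle.
case: pickP => [k /eqP gk | //]; rewrite -gk in ve.
have -> : d = s k (+) t k.
  apply/existsP/idP => [[a /andP[ea]] | st_k]; last by exists k; rewrite ve.
  by rewrite (const_on_e a k).
by rewrite !addbA addbb.
Qed.

(* The shortest arc from gamma_a to gamma_k runs backwards through the seam. *)
Definition across_seam (e : {set V}) (k : 'I_n) : bool :=
  [exists a, (gamma a \in e) && (n < 2 * (k - a))].

Definition twisted : assignment V := fun e => lift_cycle (across_seam e).

Definition cut (c : 'I_n) : bool -> V -> bool := lift_cycle (fun k => k <= c).

Lemma across_seam_pairl a b : across_seam [set gamma a; gamma b] a = (n < 2 * (a - b)).
Proof.
apply/existsP/idP => [[x /andP[]] | wraps]; last by exists b; rewrite set22.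
by rewrite !inE => /orP[] /eqP /gamma_inj -> //; rewrite subnn.
Qed.

Lemma across_seam_pairr a b : across_seam [set gamma a; gamma b] b = (n < 2 * (b - a)).
Proof. by rewrite setUC across_seam_pairl. Qed.

Lemma twisted_not_agreeing X : 3 <= n ->
  (forall k, [set gamma k; gamma (ordS k)] \in edges X) -> ~ agreeing X twisted.
Proof.
move=> n_ge3 cycle_edges [g agr].
have last_lt : n.-1 < n by lia.
pose f k := g false (gamma k).
have flip k : f (ordS k) (+) f k = (k == Ordinal last_lt).
  have [pi /(_ false) pi_eq] := agr _ (cycle_edges k).
  rewrite /f -(pi_eq _ (set21 _ _)) -(pi_eq _ (set22 _ _)) /twisted !lift_cycle_gamma.
  rewrite across_seam_pairl across_seam_pairr addbACA addbb addbF.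
  have -> : (k == Ordinal last_lt) = (k == n - 1 :> nat) by rewrite subn1.
  move: (ordS_val k); case: ltnP => k_lt ->.
    by rewrite subSnn (_ : k - k.+1 = 0) ?muln0 ?ltn0 ?addbF; [apply/idP/idP; lia | lia].
  by rewrite sub0n muln0 ltn0 subn0 /=; apply/idP/idP; have := ltn_ord k; lia.
have := big_addb_ordS_flips f.
rewrite (eq_bigr _ (fun k _ => flip k)) (bigD1 (Ordinal last_lt)) //= eqxx.
by rewrite big1 // => k /negbTE.
Qed.

Lemma unskipped_edge_agrees X c e : e \in edges X -> ~~ skips gamma e c ->
  agrees_on (twisted e) (cut c) e.
Proof.
move=> eX noskip; apply: lift_cycle_agrees => a b ea eb.
have [<- // | neq] := eqVneq a b.
have e_ab : e = [set gamma a; gamma b].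
  apply: card2_set2; rewrite ?(inj_eq gamma_inj) //.
  by move: eX; rewrite inE => /andP[_ /eqP].
subst e; rewrite across_seam_pairl across_seam_pairr.
apply: unskipped_cut_compatible neq _ _; apply: contra noskip => /eqP dist_eq.
  by apply/existsP; exists a; apply/existsP; exists b; rewrite eqxx dist_eq eqxx.
by apply/existsP; exists b; apply/existsP; exists a; rewrite setUC eqxx dist_eq eqxx.
Qed.

End Cycle.

Theorem mainTheorem9 (V : finType) (X : {set {set V}}) (n : nat)
    (gamma : 'I_n -> V) (i q : nat) (D : seq (rat * dtree V)) :
  is_complex X -> simple_cycle X gamma -> non_skipping X gamma i ->
  is_list_agreement_test X D q ->
  n <= q * i.
Proof.
(* Only the graph (X(0), X(1)) of the complex matters. *)
move=> _ [n_ge3 gamma_inj cycle_edges] noskip test.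
rewrite leqNgt; apply/negP => few_queries.
have [D_gt0 D_sum D_trees _ rejects] := test.
pose L' c := patch (twisted gamma) (cut gamma c).
have fooled p : InSeq p D -> exists c, run (L' c) p.2 = run (twisted gamma) p.2.
  move=> Dp; apply: (exists_run_eq (bad := fun e => [set c | skips gamma e c]) (i := i)).
  - by move=> e; apply: skipped_card noskip.
  - by move=> c e eX; rewrite inE /L' /patch => /(unskipped_edge_agrees gamma_inj eX) ->.
  - exact: D_trees.
  - by rewrite card_ord.
have := rejects _ (twisted_not_agreeing gamma_inj n_ge3 cycle_edges).
rewrite (acc_prob_total _ D_gt0).2 ?D_sum ?ltxx // => p Dp.
have [c <-] := fooled p Dp.
exact: test_accepts_agreeing test (patch_agreeing _ _ _) p Dp.
Qed.
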